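(* Let $|I|$ be a measurable cardinal, $\mathcal U$ a non-principal $\omega$-complete (countably complete) ultrafilter on $I$, and $\mathbb X_i=\langle X_i,\rho_i\rangle$ ($i\in I$) $L$-structures. Then the ultraproduct $\prod_{\mathcal U}\mathbb X_i$ is connected if and only if $\{i\in I:\mathbb X_i\text{ is connected}\}\in\mathcal U$.
   Context: $L$ is a language with one binary relation symbol; an $L$-structure is $\mathbb X=\langle X,\rho\rangle$, $X\neq\emptyset$, $\rho\subseteq X^2$. Connectivity is defined via the reflexivization $\rho_R=\rho\cup\{(x,x):x\in X\}$: $\mathbb X$ is connected iff for all $x,y\in X$ there are $n\in\omega$, $z_0,\dots,z_{n-1}\in X$ and $\epsilon\in\{0,1\}^{n+1}$ with $x\,\rho_R^{\epsilon_0}\,z_0\,\rho_R^{\epsilon_1}\cdots z_{n-1}\,\rho_R^{\epsilon_n}\,y$, where $\rho_R^0=\rho_R$ and $\rho_R^1=\rho_R^{-1}$. The ultraproduct $\prod_{\mathcal U}\mathbb X_i$ has universe $(\prod_i X_i)/\!\sim_{\mathcal U}$, where $x\sim_{\mathcal U}y$ iff $\{i:x_i=y_i\}\in\mathcal U$, and relation $[x]\,\rho\,[y]$ iff $\{i:x_i\,\rho_i\,y_i\}\in\mathcal U$. *)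

From Stdlib Require Import Arith.

Set Implicit Arguments.

(* An L-structure: a carrier with one binary relation.
   Non-emptiness of carriers is imposed as an explicit hypothesis where needed. *)
Record Lstr := mkLstr { carrier : Type ; rel : carrier -> carrier -> Prop }.

Definition relR (M : Lstr) (x y : carrier M) : Prop := @rel M x y \/ x = y.

(* x rho_R^eps y, with eps = false for rho_R and eps = true for rho_R^{-1} *)
Definition relR_eps (M : Lstr) (eps : bool) (x y : carrier M) : Prop :=
  if eps then @relR M y x else @relR M x y.

(* The chain is w_0 = x, w_{k+1} = z_k (k < n), w_{n+1} = y. *)
Definition chain_pt (M : Lstr) (x y : carrier M) (n : nat) (z : nat -> carrier M)
  (k : nat) : carrier M :=
  if Nat.eqb k 0 then x else if Nat.leb k n then z (k - 1) else y.

Definition connected (M : Lstr) : Prop :=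
  forall x y : carrier M, exists (n : nat) (z : nat -> carrier M) (eps : nat -> bool),
    forall k, k <= n ->
      @relR_eps M (eps k) (@chain_pt M x y n z k) (@chain_pt M x y n z (S k)).

Definition is_ultrafilter (I : Type) (U : (I -> Prop) -> Prop) : Prop :=
  U (fun _ => True) /\
  ~ U (fun _ => False) /\
  (forall A B : I -> Prop, U A -> (forall i, A i -> B i) -> U B) /\
  (forall A B : I -> Prop, U A -> U B -> U (fun i => A i /\ B i)) /\
  (forall A : I -> Prop, U A \/ U (fun i => ~ A i)).

Definition nonprincipal (I : Type) (U : (I -> Prop) -> Prop) : Prop :=
  forall i0 : I, ~ U (fun i => i = i0).

Definition omega_complete (I : Type) (U : (I -> Prop) -> Prop) : Prop :=
  forall F : nat -> I -> Prop, (forall n, U (F n)) -> U (fun i => forall n, F n i).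

Definition card_lt (J I : Type) : Prop :=
  (exists f : J -> I, forall a b, f a = f b -> a = b) /\
  ~ (exists g : I -> J, forall a b, g a = g b -> a = b).

Definition measurable_card (I : Type) : Prop :=
  ~ (exists f : I -> nat, forall a b, f a = f b -> a = b) /\
  exists V : (I -> Prop) -> Prop,
    is_ultrafilter V /\ nonprincipal V /\
    forall (J : Type) (F : J -> I -> Prop),
      card_lt J I -> (forall j, V (F j)) -> V (fun i => forall j, F j i).

(* The ultraproduct: universe = classes of prod_i X_i modulo ~_U. *)
Definition ueq (I : Type) (X : I -> Lstr) (U : (I -> Prop) -> Prop)
  (x y : forall i, carrier (X i)) : Prop := U (fun i => x i = y i).

Definition uclass (I : Type) (X : I -> Lstr) (U : (I -> Prop) -> Prop)
  (x : forall i, carrier (X i)) : (forall i, carrier (X i)) -> Prop := ueq X U x.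

Definition ultraprod_carrier (I : Type) (X : I -> Lstr) (U : (I -> Prop) -> Prop) : Type :=
  { A : (forall i, carrier (X i)) -> Prop | exists x, A = uclass X U x }.

Definition ultraprod_rel (I : Type) (X : I -> Lstr) (U : (I -> Prop) -> Prop)
  (A B : ultraprod_carrier X U) : Prop :=
  exists x y, proj1_sig A = uclass X U x /\ proj1_sig B = uclass X U y /\
              U (fun i => rel (X i) (x i) (y i)).

Definition ultraprod (I : Type) (X : I -> Lstr) (U : (I -> Prop) -> Prop) : Lstr :=
  mkLstr (@ultraprod_rel I X U).

(* Both directions are transferred one chain at a time.  A chain of fixed length n in the
   ultraproduct is, coordinatewise, a chain of length n in U-almost every factor, by finitely
   many applications of the ultrafilter properties.  Conversely, chains in almost every factor
   between the coordinates of [a] and [b] may have unbounded lengths, but countable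
   completeness makes the length constant, say m, on a U-large set, and the ultrafilter
   decides each direction bit; the coordinatewise classes then form a chain of length m. *)

From Stdlib Require Import Arith Lia Classical ClassicalEpsilon
  FunctionalExtensionality PropExtensionality ProofIrrelevance.

Lemma dependent_choice {A : Type} {B : A -> Type} (R : forall a, B a -> Prop) :
  (forall a, exists b, R a b) -> exists f : forall a, B a, forall a, R a (f a).
Proof.
  intro h.
  exists (fun a => proj1_sig (constructive_indefinite_description _ (h a))).
  intro a; exact (proj2_sig (constructive_indefinite_description _ (h a))).
Qed.

Definition is_chain (M : Lstr) (x y : carrier M) (n : nat) (z : nat -> carrier M)
  (eps : nat -> bool) : Prop :=
  forall k, k <= n -> relR_eps M (eps k) (chain_pt M x y n z k) (chain_pt M x y n z (S k)).

Definition linked (M : Lstr) (x y : carrier M) : Prop :=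
  exists (n : nat) (z : nat -> carrier M) (eps : nat -> bool), is_chain M x y n z eps.

Lemma connectedE (M : Lstr) : connected M <-> forall x y, linked M x y.
Proof. reflexivity. Qed.

Lemma disconnection_witnesses {I : Type} {X : I -> Lstr} :
  (forall i, inhabited (carrier (X i))) ->
  exists (a b : forall i, carrier (X i)), forall i, ~ connected (X i) -> ~ linked (X i) (a i) (b i).
Proof.
  intro hne.
  destruct (dependent_choice (fun i (ab : carrier (X i) * carrier (X i)) =>
      ~ connected (X i) -> ~ linked (X i) (fst ab) (snd ab))) as [ab hab].
  { intro i; destruct (classic (connected (X i))) as [ci|ci].
    - destruct (hne i) as [x]; exists (x, x); contradiction.
    - rewrite connectedE in ci.
      apply not_all_ex_not in ci as [x ci]; apply not_all_ex_not in ci as [y ci].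
      exists (x, y); intros _; exact ci. }
  exists (fun i => fst (ab i)), (fun i => snd (ab i)); exact hab.
Qed.

Section Ultrafilter.

Context {I : Type} {U : (I -> Prop) -> Prop}.
Hypothesis hU : is_ultrafilter U.

Lemma filterT : U (fun _ => True).
Proof. exact (proj1 hU). Qed.

Lemma filterS {A B : I -> Prop} : U A -> (forall i, A i -> B i) -> U B.
Proof. exact (proj1 (proj2 (proj2 hU)) A B). Qed.

Lemma filterI {A B : I -> Prop} : U A -> U B -> U (fun i => A i /\ B i).
Proof. exact (proj1 (proj2 (proj2 (proj2 hU))) A B). Qed.

Lemma filterC (A : I -> Prop) : U A \/ U (fun i => ~ A i).
Proof. exact (proj2 (proj2 (proj2 (proj2 hU))) A). Qed.

Lemma filter_nonempty {A : I -> Prop} : U A -> exists i, A i.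
Proof.
  intro hA; apply NNPP; intro hn; apply (proj1 (proj2 hU)).
  apply (filterS hA); intros i hi; apply hn; exists i; exact hi.
Qed.

Lemma filter_forall_le {P : nat -> I -> Prop} {n : nat} :
  (forall k, k <= n -> U (P k)) -> U (fun i => forall k, k <= n -> P k i).
Proof.
  induction n as [|n IH]; intro hP.
  - apply (filterS (hP 0 (le_n 0))); intros i hi k hk.
    now replace k with 0 by lia.
  - apply (filterS (filterI (IH (fun k hk => hP k (le_S _ _ hk))) (hP (S n) (le_n _)))).
    intros i [hle hSn] k hk.
    destruct (Nat.eq_dec k (S n)) as [->|k_ne]; [exact hSn | apply hle; lia].
Qed.

Lemma filter_bool_limit (E : I -> nat -> bool) :
  exists e : nat -> bool, forall k, U (fun i => E i k = e k).
Proof.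
  apply (choice (fun k b => U (fun i => E i k = b))); intro k.
  destruct (filterC (fun i => E i k = true)) as [h|h].
  - exists true; exact h.
  - exists false; apply (filterS h); intros i; destruct (E i k); congruence.
Qed.

Hypothesis hom : omega_complete U.

Lemma filter_nat_constant {A : I -> Prop} (f : I -> nat) :
  U A -> exists m, U (fun i => A i /\ f i = m).
Proof.
  intro hA; apply NNPP; intro hn.
  assert (hout : forall m, U (fun i => ~ (A i /\ f i = m))).
  { intro m; destruct (filterC (fun i => A i /\ f i = m)) as [h|h]; [exfalso; eauto | exact h]. }
  destruct (filter_nonempty (filterI hA (hom _ hout))) as [i [hi hni]].
  exact (hni (f i) (conj hi eq_refl)).
Qed.

End Ultrafilter.

Section Ultraproduct.

Context {I : Type} {U : (I -> Prop) -> Prop} {X : I -> Lstr}.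
Hypothesis hU : is_ultrafilter U.

Definition cls (a : forall i, carrier (X i)) : carrier (ultraprod X U) :=
  exist (fun A => exists x, A = uclass X U x) (uclass X U a) (ex_intro _ a eq_refl).

Lemma cls_surj (A : carrier (ultraprod X U)) : exists a, A = cls a.
Proof.
  destruct A as [A [a ->]]; exists a; unfold cls; f_equal; apply proof_irrelevance.
Qed.

Lemma uclass_eq (a b : forall i, carrier (X i)) :
  uclass X U a = uclass X U b <-> U (fun i => a i = b i).
Proof.
  split; intro h.
  - assert (hb : uclass X U b b) by exact (filterS hU (filterT hU) (fun i _ => eq_refl)).
    rewrite <- h in hb; exact hb.
  - apply functional_extensionality; intro x; apply propositional_extensionality.
    split; intro h'; apply (filterS hU (filterI hU h h')); intros i [e1 e2]; congruence.
Qed.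

Lemma cls_eq (a b : forall i, carrier (X i)) : cls a = cls b <-> U (fun i => a i = b i).
Proof.
  rewrite <- uclass_eq; split; intro h.
  - exact (f_equal (@proj1_sig _ _) h).
  - unfold cls; apply eq_exist_uncurried; exists h; apply proof_irrelevance.
Qed.

Lemma rel_cls (a b : forall i, carrier (X i)) :
  rel (ultraprod X U) (cls a) (cls b) <-> U (fun i => rel (X i) (a i) (b i)).
Proof.
  split.
  - intros (x & y & hx & hy & hr).
    apply uclass_eq in hx; apply uclass_eq in hy.
    apply (filterS hU (filterI hU hx (filterI hU hy hr))).
    intros i (-> & -> & r); exact r.
  - intro h; exists a, b; auto.
Qed.

Lemma relR_cls (a b : forall i, carrier (X i)) :
  relR (ultraprod X U) (cls a) (cls b) <-> U (fun i => relR (X i) (a i) (b i)).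
Proof.
  split.
  - intros [r|e].
    + apply rel_cls in r; apply (filterS hU r); intros i; left; assumption.
    + apply cls_eq in e; apply (filterS hU e); intros i; right; assumption.
  - intro h; destruct (filterC hU (fun i => rel (X i) (a i) (b i))) as [r|nr].
    + left; apply rel_cls; exact r.
    + right; apply cls_eq; apply (filterS hU (filterI hU h nr)).
      intros i [[r|e] n]; [contradiction | exact e].
Qed.

Lemma relR_eps_cls (eps : bool) (a b : forall i, carrier (X i)) :
  relR_eps (ultraprod X U) eps (cls a) (cls b) <-> U (fun i => relR_eps (X i) eps (a i) (b i)).
Proof. destruct eps; apply relR_cls. Qed.

Lemma chain_pt_cls (a b : forall i, carrier (X i)) (n : nat) (r : nat -> forall i, carrier (X i))
  (k : nat) :
  chain_pt (ultraprod X U) (cls a) (cls b) n (fun j => cls (r j)) k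
  = cls (fun i => chain_pt (X i) (a i) (b i) n (fun j => r j i) k).
Proof. unfold chain_pt; destruct (Nat.eqb k 0), (Nat.leb k n); reflexivity. Qed.

Lemma is_chain_cls (a b : forall i, carrier (X i)) (n : nat) (r : nat -> forall i, carrier (X i))
  (eps : nat -> bool) :
  is_chain (ultraprod X U) (cls a) (cls b) n (fun j => cls (r j)) eps <->
  forall k, k <= n -> U (fun i => relR_eps (X i) (eps k)
    (chain_pt (X i) (a i) (b i) n (fun j => r j i) k)
    (chain_pt (X i) (a i) (b i) n (fun j => r j i) (S k))).
Proof.
  unfold is_chain; split; intros h k hk; specialize (h k hk);
    rewrite !chain_pt_cls, relR_eps_cls in *; exact h.
Qed.

Lemma linked_cls_coord (a b : forall i, carrier (X i)) :
  linked (ultraprod X U) (cls a) (cls b) -> U (fun i => linked (X i) (a i) (b i)).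
Proof.
  intros (n & z & eps & hz).
  destruct (choice (fun j r => z j = cls r) (fun j => cls_surj (z j))) as [r hr].
  replace z with (fun j => cls (r j)) in hz by (apply functional_extensionality; auto).
  pose proof (proj1 (is_chain_cls a b n r eps) hz) as hsteps.
  apply (filterS hU (filter_forall_le hU hsteps)).
  intros i hi; exists n, (fun j => r j i), eps; exact hi.
Qed.

Hypothesis hom : omega_complete U.

Lemma linked_cls (a b : forall i, carrier (X i)) :
  U (fun i => linked (X i) (a i) (b i)) -> linked (ultraprod X U) (cls a) (cls b).
Proof.
  intro hl.
  destruct (dependent_choice (fun i (c : nat * (nat -> carrier (X i)) * (nat -> bool)) =>
      linked (X i) (a i) (b i) -> is_chain (X i) (a i) (b i) (fst (fst c)) (snd (fst c)) (snd c)))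
    as [c hc].
  { intro i; destruct (classic (linked (X i) (a i) (b i))) as [(n & z & eps & h)|nl].
    - exists (n, z, eps); intros _; exact h.
    - exists (0, fun _ => a i, fun _ => false); intro l; contradiction. }
  destruct (filter_nat_constant hU hom (fun i => fst (fst (c i))) hl) as [m hm].
  destruct (filter_bool_limit hU (fun i => snd (c i))) as [e he].
  exists m, (fun j => cls (fun i => snd (fst (c i)) j)), e.
  apply (proj2 (is_chain_cls a b m (fun j i => snd (fst (c i)) j) e)); intros k hk.
  apply (filterS hU (filterI hU hm (he k))); intros i [[li hn] hek].
  specialize (hc i li); rewrite hn in hc; rewrite <- hek; exact (hc k hk).
Qed.

End Ultraproduct.

Arguments cls {I} U {X} a.

Theorem theorem2p7 (I : Type) (U : (I -> Prop) -> Prop) (X : I -> Lstr)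
  (hI : measurable_card I)
  (hU : is_ultrafilter U) (hnp : nonprincipal U) (hom : omega_complete U)
  (hne : forall i, inhabited (carrier (X i))) :
  connected (ultraprod X U) <-> U (fun i => connected (X i)).
Proof.
  rewrite connectedE; split.
  - intro hc; destruct (filterC hU (fun i => connected (X i))) as [h|hdis]; [exact h|].
    destruct (disconnection_witnesses hne) as (a & b & hab).
    pose proof (linked_cls_coord hU a b (hc (cls U a) (cls U b))) as hl.
    destruct (filter_nonempty hU (filterI hU hdis hl)) as [i [di li]].
    destruct (hab i di li).
  - intros hC A B.
    destruct (cls_surj A) as [a ->], (cls_surj B) as [b ->].
    apply (linked_cls hU hom); apply (filterS hU hC); intros i ci; apply ci.
Qed.
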